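(* Let $d$ be a positive integer and let $M$ be the $d\times d$ lower triangular integer matrix with entries $M_{ij}=\binom{i}{j}$ for $1\leqslant j\leqslant i\leqslant d$ and $M_{ij}=0$ for $j>i$. Call a vector $r\in\mathbb{R}^d$ stable if for every $k\in\mathbb{N}_{>0}$ the last coordinate of $M^k r$ is an integer. Then the set of all stable vectors is a discrete subgroup of $\mathbb{R}^d$. *)

From mathcomp Require Import all_boot all_order all_algebra.
From mathcomp Require Import reals.
Set Implicit Arguments. Unset Strict Implicit. Unset Printing Implicit Defensive.
Import Order.TTheory GRing.Theory Num.Theory.
Local Open Scope ring_scope.

(* Dimension d = n.+1 (d positive).  Indices i j : 'I_d stand for the
   paper's 1-based indices i+1, j+1. *)
Definition binomM (R : realType) (n : nat) : 'M[R]_n.+1 :=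
  \matrix_(i < n.+1, j < n.+1)
     (if (j <= i)%N then ('C(i.+1, j.+1))%:R else 0).

Definition stable (R : realType) (n : nat) (r : 'cV[R]_n.+1) : Prop :=
  forall k : nat, (0 < k)%N ->
    exists z : int, ((binomM R n) ^+ k *m r) ord_max 0 = z%:~R.

(* S is a discrete subgroup of R^d: an additive subgroup in which every point
   is isolated (w.r.t. the sup-norm, which induces the usual topology). *)
Definition discrete_subgroup (R : realType) (n : nat) (S : 'cV[R]_n.+1 -> Prop)
  : Prop :=
  [/\ S 0,
      (forall r s, S r -> S s -> S (r - s)) &
      (forall r, S r -> exists2 e : R, 0 < e &
         forall s, S s -> (forall i : 'I_n.+1, `|s i 0 - r i 0| < e) -> s = r)].

From mathcomp Require Import all_boot all_order all_algebra.
From mathcomp Require Import reals.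
From mathcomp Require Import ring zify.
Set Implicit Arguments. Unset Strict Implicit. Unset Printing Implicit Defensive.
Import Order.TTheory GRing.Theory Num.Theory.
Local Open Scope ring_scope.

(* Powers of the binomial matrix are explicit: (M^k)_ij = C(i,j) k^(i-j).  So
   the last coordinate of M^k r is P_r(k) for the polynomial
   P_r(X) = sum_j C(d,j) r_j X^(d-j) of degree < d, which is linear in r; hence
   stable vectors form a group.  If every |r_j| < (d+1)^-d, the binomial theorem
   gives |P_r(k)| < 1 for 1 <= k <= d, so the integers P_r(1), ..., P_r(d) all
   vanish; having d roots, P_r is zero, and so is r.  Thus 0, and by
   translation every stable vector, is isolated. *)

Lemma mul_bin_subset a b c : (c <= b)%N ->
  ('C(a, b) * 'C(b, c) = 'C(a, c) * 'C(a - c, b - c))%N.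
Proof.
move=> le_cb; have [le_ba|lt_ab] := leqP b a; last first.
  rewrite bin_small // mul0n; have [le_ca|lt_ac] := leqP c a.
    by rewrite [X in (_ * X)%N]bin_small ?muln0 //; lia.
  by rewrite bin_small.
have le_ca : (c <= a)%N by lia.
have le_bca : (b - c <= a - c)%N by lia.
have fact_bc := bin_fact le_cb; have fact_ab := bin_fact le_ba.
have fact_ac := bin_fact le_ca; have fact_abc := bin_fact le_bca.
rewrite (_ : (a - c - (b - c) = a - b)%N) in fact_abc; last by lia.
apply/eqP; rewrite -(eqn_pmul2r (fact_gt0 c)) -(eqn_pmul2r (fact_gt0 (b - c))).
rewrite -(eqn_pmul2r (fact_gt0 (a - b))); apply/eqP.
transitivity ('C(a, b) * ('C(b, c) * (c`! * (b - c)`!)) * (a - b)`!)%N; first ring.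
rewrite fact_bc -mulnA fact_ab -fact_ac -fact_abc; ring.
Qed.

Lemma sum_bin_bin_exp (R : pzSemiRingType) (x : R) N a b : (a < N)%N ->
  \sum_(l < N) ('C(a, l) * 'C(l, b))%:R * x ^+ (l - b) =
  'C(a, b)%:R * (x + 1) ^+ (a - b).
Proof.
move=> lt_aN; have [le_ba|lt_ab] := leqP b a; last first.
  rewrite bin_small // mul0r big1 // => l _.
  have [le_la|lt_al] := leqP l a; last by rewrite bin_small ?mul0n ?mul0r.
  by rewrite [X in (_ * X)%N]bin_small ?muln0 ?mul0r //; lia.
rewrite -(big_mkord xpredT (fun l => ('C(a, l) * 'C(l, b))%:R * x ^+ (l - b))).
rewrite (@big_cat_nat _ _ _ b) //=; last by lia.
rewrite [X in X + _]big1_seq ?add0r; last first.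
  move=> l /andP[_]; rewrite mem_index_iota => /andP[_ lt_lb].
  by rewrite [X in (_ * X)%N]bin_small ?muln0 ?mul0r.
rewrite -{1}[b]add0n big_addn (@big_cat_nat _ _ _ (a - b).+1) //=; last by lia.
rewrite [X in _ + X]big1_seq ?addr0; last first.
  move=> m /andP[_]; rewrite mem_index_iota => /andP[lt_m _].
  by rewrite bin_small ?mul0n ?mul0r //; lia.
rewrite big_mkord exprD1n mulr_sumr; apply: eq_bigr => m _.
by rewrite mul_bin_subset ?leq_addl // addnK natrM -mulrA [X in _ * X]mulr_natl.
Qed.

Lemma sum_bin_exp_leq m b : (\sum_(i < m) 'C(m, i) * b ^ i <= b.+1 ^ m)%N.
Proof.
rewrite -add1n expnDn big_ord_recr /= (leq_trans _ (leq_addr _ _)) //.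
by apply: leq_sum => i _; rewrite exp1n mul1n.
Qed.

Lemma poly_eq0_nat_roots (R : numDomainType) m (p : {poly R}) :
  (size p <= m)%N -> (forall k, (0 < k <= m)%N -> root p k%:R) -> p = 0.
Proof.
move=> size_p roots_p; apply/eqP; apply: contraTT size_p => p_neq0.
rewrite -ltnNge -[m](size_iota 0) -(size_map (fun k => k.+1%:R : R)).
apply: max_poly_roots p_neq0 _ _.
  apply/allP => x /mapP[k]; rewrite mem_iota => /andP[_ lt_km] ->.
  by apply: roots_p.
by rewrite map_inj_uniq ?iota_uniq // => k l /eqP; rewrite eqr_nat eqSS => /eqP.
Qed.

Lemma intr_normr_lt1 (R : numDomainType) (z : int) : `|z%:~R : R| < 1 -> z = 0.
Proof. by rewrite -intr_norm ltrz1 => lt_z1; apply/eqP; rewrite -normr_le0; lia. Qed.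

Section StableVectors.
Variables (R : realType) (n : nat).

Lemma binomME (i j : 'I_n.+1) : binomM R n i j = 'C(i.+1, j.+1)%:R.
Proof. by rewrite mxE; case: leqP => // lt_ij; rewrite bin_small. Qed.

Lemma binomM_expE k (i j : 'I_n.+1) :
  (binomM R n ^+ k) i j = 'C(i.+1, j.+1)%:R * k%:R ^+ (i - j).
Proof.
elim: k i j => [|k IHk] i j.
  rewrite expr0 mxE; have [<-|neq_ij] := eqVneq i j.
    by rewrite binn subnn mulr1.
  have [le_ji|lt_ij] := leqP j i; last by rewrite bin_small ?mul0r.
  by rewrite expr0n subn_eq0 leqNgt ltn_neqAle eq_sym neq_ij le_ji mulr0.
rewrite exprS -mulmxE mxE -natr1 -subSS -(@sum_bin_bin_exp _ _ n.+2); last first.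
  exact: ltn_ord i.
rewrite [RHS]big_ord_recl /= bin0n muln0 mul0r add0r; apply: eq_bigr => l _.
by rewrite /bump leq0n add1n binomME IHk mulrA -natrM subSS.
Qed.

(* In the paper's 1-based indexing, the coefficient of X^i is C(d,i) r_(d-i). *)
Definition stable_poly (r : 'cV[R]_n.+1) : {poly R} :=
  \poly_(i < n.+1) ('C(n.+1, i)%:R * r (inord (n - i)) 0).

Lemma stable_polyE k (r : 'cV[R]_n.+1) :
  (binomM R n ^+ k *m r) ord_max 0 = (stable_poly r).[k%:R].
Proof.
rewrite mxE horner_poly [RHS](reindex_inj rev_ord_inj); apply: eq_bigr => j _ /=.
have le_jn : (j <= n)%N by rewrite -ltnS.
by rewrite binomM_expE /= bin_sub // subSS subKn // inord_val mulrAC.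
Qed.

Lemma stable_poly_eq0 (r : 'cV[R]_n.+1) : stable_poly r = 0 -> r = 0.
Proof.
move=> r0; apply/matrixP => j c; rewrite ord1 mxE.
have /eqP := congr1 (fun p : {poly R} => p`_(n - j)) r0.
have le_jn : (j <= n)%N by rewrite -ltnS.
rewrite coef_poly coef0 ltnS leq_subr subKn // inord_val mulf_eq0 pnatr_eq0.
by rewrite eqn0Ngt bin_gt0 (leqW (leq_subr _ _)) => /eqP.
Qed.

Lemma normr_stable_poly_lt (r : 'cV[R]_n.+1) (e : R) k :
  (k <= n.+1)%N -> (forall i, `|r i 0| < e) ->
  `|(stable_poly r).[k%:R]| < e * (n.+2 ^ n.+1)%:R.
Proof.
move=> le_kn small_r; have e_gt0 : 0 < e := le_lt_trans (normr_ge0 _) (small_r 0).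
rewrite horner_poly (le_lt_trans (ler_norm_sum _ _ _)) //.
apply: (@lt_le_trans _ _ (\sum_(i < n.+1) 'C(n.+1, i)%:R * e * n.+1%:R ^+ i)).
  apply: ltr_sum => [|i _]; first by apply/hasP; exists ord0; rewrite ?mem_index_enum.
  rewrite !normrM normr_nat normrX normr_nat -!mulrA ltr_pM2l; last first.
    by rewrite ltr0n bin_gt0 ltnW.
  apply: (@le_lt_trans _ _ (`|r (inord (n - i)) 0| * n.+1%:R ^+ i)).
    by rewrite ler_wpM2l // lerXn2r // ?nnegrE ?ler0n ?ler_nat.
  by rewrite ltr_pM2r ?exprn_gt0 ?ltr0n.
under eq_bigr do rewrite mulrAC -natrX -natrM.
rewrite -mulr_suml -natr_sum mulrC ler_wpM2l ?ler_nat ?sum_bin_exp_leq //.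
exact: ltW.
Qed.

Lemma stable0 : stable (0 : 'cV[R]_n.+1).
Proof. by move=> k _; exists 0; rewrite mulmx0 mxE. Qed.

Lemma stableB (r s : 'cV[R]_n.+1) : stable r -> stable s -> stable (r - s).
Proof.
move=> st_r st_s k k_gt0; have [y ry] := st_r k k_gt0; have [z sz] := st_s k k_gt0.
by exists (y - z); rewrite mulmxBr mxE [X in _ + X]mxE ry sz intrB.
Qed.

Lemma stable_small_eq0 (r : 'cV[R]_n.+1) :
  stable r -> (forall i, `|r i 0| < (n.+2 ^ n.+1)%:R^-1) -> r = 0.
Proof.
move=> st_r small_r; apply/stable_poly_eq0/(@poly_eq0_nat_roots _ n.+1).
  exact: size_poly.
move=> k /andP[k_gt0 le_kn]; have [z rz] := st_r k k_gt0.
suff z0 : z = 0 by rewrite /root -stable_polyE rz z0.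
apply: (@intr_normr_lt1 R); rewrite -rz stable_polyE.
apply: (lt_le_trans (normr_stable_poly_lt le_kn small_r)).
by rewrite mulVf // pnatr_eq0 expn_eq0.
Qed.

End StableVectors.

Theorem mainTheorem4 (R : realType) (n : nat) :
  discrete_subgroup (@stable R n).
Proof.
split; [exact: stable0 | exact: stableB |].
move=> r st_r; exists (n.+2 ^ n.+1)%:R^-1 => [|s st_s near_sr].
  by rewrite invr_gt0 ltr0n expn_gt0.
apply/eqP; rewrite -subr_eq0; apply/eqP/stable_small_eq0; first exact: stableB.
by move=> i; rewrite !mxE.
Qed.
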